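(* Let $k\ge 6$ be an even integer with $k\equiv 0\pmod 3$, let $\mathcal{N}=\{0,1,\dots,2k-1\}$ and let $\mathcal{R}_1=\{R\in\binom{\mathcal{N}}{k}:\sum_{x\in R}x\equiv 1\pmod 3\}$. Then every subset $X\subset\mathcal{N}$ with $1\le |X|\le k-2$ belongs to $\mathcal{D}(\mathcal{R}_1)$, i.e. there exist $R,R'\in\mathcal{R}_1$ with $X=R\setminus R'$.
   Context: $\binom{\mathcal{N}}{k}$ is the family of all $k$-element subsets of $\mathcal{N}$. For a family $\mathcal{F}$, $\mathcal{D}(\mathcal{F})=\{F\setminus F' : F,F'\in\mathcal{F}\}$. *)

From mathcomp Require Import all_boot.
Set Implicit Arguments. Unset Strict Implicit. Unset Printing Implicit Defensive.

Definition R1 (k : nat) : {set {set 'I_(2 * k)}} :=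
  [set R : {set 'I_(2 * k)} | (#|R| == k) && ((\sum_(x in R) (x : nat)) %% 3 == 1)].

Definition diff_family (T : finType) (F : {set {set T}}) : {set {set T}} :=
  [set A :\: B | A in F, B in F].

From mathcomp Require Import all_boot zify.

Set Implicit Arguments.
Unset Strict Implicit.
Unset Printing Implicit Defensive.

(* Write k = 6q, so that each residue class mod 3 of N has 4q elements.  It
   suffices to find R' outside X with |R'| = k and weight 1 mod 3, together
   with B inside R' with |B| = |X| and the same weight mod 3 as X: then
   R = X + (R' - B) lies in R_1 and R - R' = X.  Since the weight of a set mod 3
   only depends on how many of its elements fall in each residue class, this
   reduces to choosing class counts d <= |N - X| and b <= d.  The counts are
   found by starting from a small "gadget" that realises every residue with a
   fixed total, and filling up the remaining total with arbitrary elements. *)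

Definition residue_choice (u0 u1 u2 j r : nat) := exists v0 v1 v2,
  [/\ v0 <= u0, v1 <= u1, v2 <= u2, v0 + v1 + v2 = j & (v1 + 2 * v2) %% 3 = r].

Definition hits_all_residues (u0 u1 u2 j : nat) :=
  forall r, r < 3 -> residue_choice u0 u1 u2 j r.

Definition nested_choice (y0 y1 y2 k m s : nat) := exists d0 d1 d2,
  [/\ d0 <= y0, d1 <= y1, d2 <= y2, d0 + d1 + d2 = k & (d1 + 2 * d2) %% 3 = 1]
  /\ residue_choice d0 d1 d2 m s.

Lemma split_le_sum u0 u1 u2 n : n <= u0 + u1 + u2 ->
  exists f0 f1 f2, [/\ f0 <= u0, f1 <= u1, f2 <= u2 & f0 + f1 + f2 = n].
Proof.
move=> le_n; case: (leqP n u0) => [le_n0 | lt0]; first by exists n, 0, 0; split; lia.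
case: (leqP n (u0 + u1)) => [le_n01 | lt01]; first by exists u0, (n - u0), 0; split; lia.
by exists u0, u1, (n - u0 - u1); split; lia.
Qed.

Lemma hits_all_residues_widen g0 g1 g2 h u0 u1 u2 j :
  hits_all_residues g0 g1 g2 h -> g0 <= u0 -> g1 <= u1 -> g2 <= u2 ->
  h <= j -> j + (g0 + g1 + g2) <= u0 + u1 + u2 + h ->
  hits_all_residues u0 u1 u2 j.
Proof.
move=> gadget le0 le1 le2 le_hj le_j r lt_r3.
have [f0 [f1 [f2 [F0 F1 F2 Fsum]]]] :=
  @split_le_sum (u0 - g0) (u1 - g1) (u2 - g2) (j - h) ltac:(lia).
have [v0 [v1 [v2 [V0 V1 V2 Vsum Vres]]]] :=
  gadget ((r + 3 - (f1 + 2 * f2) %% 3) %% 3) (ltn_pmod _ (isT : 0 < 3)).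
by exists (f0 + v0), (f1 + v1), (f2 + v2); split; lia.
Qed.

Lemma hits_all_residues_111 : hits_all_residues 1 1 1 1.
Proof.
by case=> [|[|[|//]]] _; [exists 1, 0, 0 | exists 0, 1, 0 | exists 0, 0, 1].
Qed.

Lemma hits_all_residues_220 : hits_all_residues 2 2 0 2.
Proof.
by case=> [|[|[|//]]] _; [exists 2, 0, 0 | exists 1, 1, 0 | exists 0, 2, 0].
Qed.

Lemma hits_all_residues_202 : hits_all_residues 2 0 2 2.
Proof.
by case=> [|[|[|//]]] _; [exists 2, 0, 0 | exists 0, 0, 2 | exists 1, 0, 1].
Qed.

Lemma hits_all_residues_022 : hits_all_residues 0 2 2 2.
Proof.
by case=> [|[|[|//]]] _; [exists 0, 1, 1 | exists 0, 0, 2 | exists 0, 2, 0].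
Qed.

(* The gadget g is reserved inside d for the inner choice of b; the gadget a,
   placed in the rest of y, fixes the residue of d. *)
Lemma nested_choice_of_gadgets y0 y1 y2 k m s a0 a1 a2 hA g0 g1 g2 hB :
  hits_all_residues a0 a1 a2 hA -> hits_all_residues g0 g1 g2 hB ->
  g0 + a0 <= y0 -> g1 + a1 <= y1 -> g2 + a2 <= y2 ->
  hA + (g0 + g1 + g2) <= k -> k + (a0 + a1 + a2) <= y0 + y1 + y2 + hA ->
  hB <= m -> m + (g0 + g1 + g2) <= k + hB -> s < 3 ->
  nested_choice y0 y1 y2 k m s.
Proof.
move=> gadgetA gadgetB le0 le1 le2 le_k1 le_k2 le_m1 le_m2 lt_s3.
have [e0 [e1 [e2 [E0 E1 E2 Esum Eres]]]] :=
  hits_all_residues_widen (u0 := y0 - g0) (u1 := y1 - g1) (u2 := y2 - g2)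
    (j := k - (g0 + g1 + g2)) gadgetA ltac:(lia) ltac:(lia) ltac:(lia)
    ltac:(lia) ltac:(lia) (r := (1 + 3 - (g1 + 2 * g2) %% 3) %% 3)
    (ltn_pmod _ (isT : 0 < 3)).
exists (e0 + g0), (e1 + g1), (e2 + g2); split; first by split; lia.
by apply: (hits_all_residues_widen gadgetB); lia.
Qed.

Lemma nested_choice_exists q m x0 x1 x2 y0 y1 y2 s :
  1 <= q -> 1 <= m -> m + 2 <= 6 * q ->
  x0 + y0 = 4 * q -> x1 + y1 = 4 * q -> x2 + y2 = 4 * q ->
  x0 + x1 + x2 = m -> s < 3 ->
  nested_choice y0 y1 y2 (6 * q) m s.
Proof.
move=> q1 m1 m2 e0 e1 e2 ex lt_s3.
have G111 := hits_all_residues_111; have G220 := hits_all_residues_220.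
have G202 := hits_all_residues_202; have G022 := hits_all_residues_022.
case: (leqP y2 1) => [y2_le1 | y2_gt1].
  case: (posnP y2) => y2_0; [apply: (nested_choice_of_gadgets G220 G220) |
                             apply: (nested_choice_of_gadgets G111 G220)]; lia.
case: (leqP y1 1) => [y1_le1 | y1_gt1].
  case: (posnP y1) => y1_0; [apply: (nested_choice_of_gadgets G202 G202) |
                             apply: (nested_choice_of_gadgets G111 G202)]; lia.
case: (leqP y0 1) => [y0_le1 | y0_gt1].
  case: (posnP y0) => y0_0; [apply: (nested_choice_of_gadgets G022 G022) |
                             apply: (nested_choice_of_gadgets G111 G022)]; lia.
by apply: (nested_choice_of_gadgets G111 G111); lia.
Qed.

Lemma exists_subset_card (T : finType) (S : {set T}) n : n <= #|S| ->
  exists2 U : {set T}, U \subset S & #|U| = n.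
Proof.
move=> le_n; exists [set x in take n (enum S)].
  by apply/subsetP => x; rewrite inE => /mem_take; rewrite mem_enum.
rewrite cardsE; move/card_uniqP: (take_uniq n (enum_uniq (mem S))) => ->.
by rewrite size_takel // -cardE.
Qed.

Section ResidueParts.

Variable n : nat.
Implicit Types (S T : {set 'I_n}) (r : nat).

Definition residue_class r : {set 'I_n} := [set x : 'I_n | x %% 3 == r].

Definition residue_part r S := S :&: residue_class r.

Lemma big_residue_split (F : 'I_n -> nat) S :
  \sum_(x in S) F x = \sum_(x in residue_part 0 S) F x
    + \sum_(x in residue_part 1 S) F x + \sum_(x in residue_part 2 S) F x.
Proof.
rewrite (big_setID (residue_class 0))
        (@big_setID _ _ _ _ (S :\: residue_class 0) (residue_class 1)) /= addnA.
have mod3 (x : nat) : x %% 3 = 0 \/ x %% 3 = 1 \/ x %% 3 = 2 by lia.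
congr (_ + _ + _); apply: eq_bigl => x; rewrite !inE;
  by case: (mod3 x) => [->|[->|->]]; rewrite ?andbT ?andbF.
Qed.

Lemma card_residue_split S :
  #|S| = #|residue_part 0 S| + #|residue_part 1 S| + #|residue_part 2 S|.
Proof. by rewrite -!sum1_card (big_residue_split (fun=> 1)). Qed.

Lemma sum_residue_part_mod r S :
  \sum_(x in residue_part r S) (x : nat) = #|residue_part r S| * r %[mod 3].
Proof.
rewrite -modn_summ (eq_bigr (fun=> r)) ?sum_nat_const // => x.
by rewrite inE => /andP[_]; rewrite inE => /eqP.
Qed.

Lemma sum_mod3 S :
  (\sum_(x in S) (x : nat)) %% 3
  = (#|residue_part 1 S| + 2 * #|residue_part 2 S|) %% 3.
Proof.
rewrite (big_residue_split (fun x => nat_of_ord x)).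
have := sum_residue_part_mod 0 S; have := sum_residue_part_mod 1 S.
have := sum_residue_part_mod 2 S; lia.
Qed.

Lemma card_residue_part_compl r S :
  #|residue_part r S| + #|residue_part r (~: S)| = #|residue_class r|.
Proof.
rewrite -(cardsID S (residue_class r)) /residue_part setDE.
by rewrite !(setIC (residue_class r)).
Qed.

Lemma residue_part_sub r s T : T \subset residue_class s ->
  residue_part r T = if s == r then T else set0.
Proof.
move=> sub_T; have [<- | ne_sr] := eqVneq s r; first exact/setIidPl.
apply/setP => x; rewrite !inE; apply/andP => -[/(subsetP sub_T)].
by rewrite inE => /eqP -> /eqP eq_sr; rewrite eq_sr eqxx in ne_sr.
Qed.

Lemma residue_parts_realize S v0 v1 v2 :
  v0 <= #|residue_part 0 S| -> v1 <= #|residue_part 1 S| ->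
  v2 <= #|residue_part 2 S| ->
  exists2 U : {set 'I_n}, U \subset S &
    [/\ #|residue_part 0 U| = v0, #|residue_part 1 U| = v1
      & #|residue_part 2 U| = v2].
Proof.
move=> /exists_subset_card[T0 sub0 <-] /exists_subset_card[T1 sub1 <-].
move=> /exists_subset_card[T2 sub2 <-].
have subS r T : T \subset residue_part r S -> T \subset S.
  by move/subset_trans; apply; apply: subsetIl.
have subM r T : T \subset residue_part r S -> T \subset residue_class r.
  by move/subset_trans; apply; apply: subsetIr.
exists (T0 :|: T1 :|: T2).
  by rewrite !subUset (subS _ _ sub0) (subS _ _ sub1) (subS _ _ sub2).
rewrite /residue_part !setIUl -!/(residue_part _ _).
by rewrite !(residue_part_sub _ (subM _ _ sub0)) !(residue_part_sub _ (subM _ _ sub1))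
           !(residue_part_sub _ (subM _ _ sub2)) /= ?set0U ?setU0.
Qed.

End ResidueParts.

Lemma card_residue_class n c r : n = 3 * c -> r < 3 -> #|residue_class n r| = c.
Proof.
move=> -> lt_r3; rewrite -sum1dep_card big_mkcond /=.
rewrite -(big_mkord xpredT (fun i => if i %% 3 == r then 1 else 0)).
elim: c => [|c IH]; first by rewrite big_geq.
rewrite (_ : 3 * c.+1 = (3 * c).+3); last by lia.
rewrite !big_nat_recr //= IH.
have -> : (3 * c).+2 %% 3 = 2 by lia.
have -> : (3 * c).+1 %% 3 = 1 by lia.
have -> : (3 * c) %% 3 = 0 by lia.
by case: r lt_r3 {IH} => [|[|[|]]] //= _; lia.
Qed.

Lemma mem_diff_family_R1 k (X R' B : {set 'I_(2 * k)}) :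
  [disjoint R' & X] -> B \subset R' -> R' \in R1 k -> #|B| = #|X| ->
  (\sum_(x in B) (x : nat)) %% 3 = (\sum_(x in X) (x : nat)) %% 3 ->
  X \in diff_family (R1 k).
Proof.
move=> dis_R'X sub_BR' R'_R1 card_B sum_B.
set A := R' :\: B.
have dis_XA : [disjoint X & A].
  by rewrite disjoint_sym (disjointWl (subsetDl R' B)).
have sum_XA (F : 'I_(2 * k) -> nat) :
    \sum_(x in X :|: A) F x = \sum_(x in X) F x + \sum_(x in A) F x.
  by rewrite -bigU //; apply: eq_bigl => x; rewrite !inE.
have sum_R' (F : 'I_(2 * k) -> nat) :
    \sum_(x in R') F x = \sum_(x in B) F x + \sum_(x in A) F x.
  by rewrite (big_setID B) (setIidPr sub_BR').
move: R'_R1; rewrite !inE => /andP[/eqP card_R' /eqP sum_R'_1].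
apply/imset2P; exists (X :|: A) R'; rewrite ?inE //.
- rewrite -!sum1_card in card_R' card_B *.
  rewrite sum_XA -card_B -sum_R' card_R' eqxx /=.
  by rewrite sum_XA -modnDml -sum_B modnDml -sum_R' sum_R'_1.
- by rewrite card_R' sum_R'_1 !eqxx.
- have /eqP A_R' : A :\: R' == set0 by rewrite setD_eq0 subsetDl.
  by rewrite setDUl A_R' setU0; apply/esym/setDidPl; rewrite disjoint_sym.
Qed.

Unset Implicit Arguments.

Theorem mainTheorem9 (k : nat) :
  6 <= k -> ~~ odd k -> k %% 3 = 0 ->
  forall X : {set 'I_(2 * k)}, 1 <= #|X| <= k - 2 ->
    X \in diff_family (R1 k).
Proof.
move=> k_ge6 k_even k_mod3 X /andP[X_gt0 X_le].
have [q k_6q] : exists q, k = 6 * q.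
  have k_mod2 : k %% 2 = 0 by rewrite modn2 (negbTE k_even).
  by exists (k %/ 6); lia.
have card_parts r : r < 3 ->
    #|residue_part r X| + #|residue_part r (~: X)| = 4 * q.
  move=> lt_r3; rewrite card_residue_part_compl.
  by apply: card_residue_class lt_r3; lia.
have [d0 [d1 [d2 [[D0 D1 D2 D_card D_sum] [b0 [b1 [b2 [B0 B1 B2 B_card B_sum]]]]]]]] :=
  nested_choice_exists (q := q) (m := #|X|) (s := (\sum_(x in X) (x : nat)) %% 3)
    ltac:(lia) X_gt0 ltac:(lia) (card_parts 0 isT) (card_parts 1 isT) (card_parts 2 isT)
    (esym (card_residue_split X)) (ltn_pmod _ (isT : 0 < 3)).
have [R' sub_R' [R'0 R'1 R'2]] := residue_parts_realize D0 D1 D2.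
rewrite -R'0 -R'1 -R'2 in B0 B1 B2.
have [B sub_B [B0' B1' B2']] := residue_parts_realize B0 B1 B2.
apply: (mem_diff_family_R1 (R' := R') (B := B)) => //.
- by rewrite disjoints_subset.
- by rewrite inE card_residue_split sum_mod3 R'0 R'1 R'2 D_card k_6q D_sum !eqxx.
- by rewrite card_residue_split B0' B1' B2'.
- by rewrite [LHS]sum_mod3 B1' B2'.
Qed.
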